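(* Let $D=(V,A)$ be a minimally Steiner rooted $k$-arc-connected $3$-regular directed graph with root $r$ and terminal set $S\subseteq V\setminus\{r\}$, and let $C\subseteq A$ be a directed cycle. For each $s\in S$, let $Q_s\subseteq A$ be an inclusionwise minimal set of arcs that is the arc-disjoint union of $k$ directed $r$-$s$ paths. Then (a) $C\subseteq\bigcup_{s\in S}Q_s$, and (b) $C\setminus Q_s\neq\emptyset$ for all $s\in S$.
   Context: Directed graphs are loopless, parallel arcs allowed. $D$ with root $r$ and terminals $S$ is Steiner rooted $k$-arc-connected if for every $s\in S$ there are $k$ pairwise arc-disjoint directed $r$-$s$ paths; it is minimally so if in addition deleting any arc destroys this property. $D$ is $3$-regular (with respect to $k$) if $r$ has in-degree $0$ and out-degree $k$, every terminal has in-degree $k$ and out-degree $0$, and every other vertex has in-degree plus out-degree $3$. *)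

From mathcomp Require Import all_boot.
Unset Printing Implicit Defensive.

(* A directed multigraph: vertex type V, arc type A (parallel arcs allowed),
   each arc a goes from [tl a] to [hd a]. *)

Section Digraph.
Variables (V A : finType) (tl hd : A -> V).

Definition loopless : Prop := forall a : A, tl a != hd a.

Definition indeg (v : V) : nat := #|[set a : A | hd a == v]|.
Definition outdeg (v : V) : nat := #|[set a : A | tl a == v]|.

Definition arc_next (a b : A) : bool := hd a == tl b.

Definition dpath (u v : V) (p : seq A) : Prop :=
  exists a0 p', p = a0 :: p' /\ tl a0 = u /\ path arc_next a0 p' /\
                hd (last a0 p') = v /\ uniq (u :: map hd p).

Definition dcycle (C : {set A}) : Prop :=
  exists a0 p', path arc_next a0 p' /\ arc_next (last a0 p') a0 /\
                uniq (map tl (a0 :: p')) /\ C = [set a in a0 :: p'].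

Definition disjoint_paths (k : nat) (F : {set A}) (u v : V) (P : 'I_k -> seq A) : Prop :=
  (forall i, dpath u v (P i)) /\
  (forall i, {subset P i <= F}) /\
  (forall i j, i != j -> forall a, a \in P i -> a \notin P j).

Definition steiner_conn (k : nat) (r : V) (S : {set V}) (F : {set A}) : Prop :=
  forall s, s \in S -> exists P : 'I_k -> seq A, disjoint_paths k F r s P.

Definition min_steiner_conn (k : nat) (r : V) (S : {set V}) : Prop :=
  steiner_conn k r S [set: A] /\
  forall a : A, ~ steiner_conn k r S ([set: A] :\ a).

Definition regular3 (k : nat) (r : V) (S : {set V}) : Prop :=
  indeg r = 0 /\ outdeg r = k /\
  (forall s, s \in S -> indeg s = k /\ outdeg s = 0) /\
  (forall v, v != r -> v \notin S -> indeg v + outdeg v = 3).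

Definition kpath_union (k : nat) (u v : V) (Q : {set A}) : Prop :=
  exists P : 'I_k -> seq A, disjoint_paths k [set: A] u v P /\
                            Q = \bigcup_(i < k) [set a in P i].

Definition min_kpath_union (k : nat) (u v : V) (Q : {set A}) : Prop :=
  kpath_union k u v Q /\
  forall Q' : {set A}, Q' \subset Q -> kpath_union k u v Q' -> Q' = Q.

End Digraph.

From mathcomp Require Import all_boot zify.
Set Implicit Arguments.
Unset Strict Implicit.

(* A union of k arc-disjoint r-s paths, and anything obtained from it by
   deleting the arcs of a directed cycle, is a "k-flow" from r to s: every vertex is balanced except r and s, which have
   excess out-degree resp. in-degree k. Conversely, a k-flow with r != s
   decomposes into k arc-disjoint r-s paths: the vertices reachable from r
   contain s, since otherwise no arc leaves them while k units of excess do,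
   so there is an r-s path, and removing it leaves a (k-1)-flow.
   (a) If an arc lies in no Q_s, every Q_s survives its deletion, contradicting
   minimality of D. (b) If C is contained in Q_s, then Q_s minus C is a k-flow,
   hence contains an arc-disjoint union of k r-s paths, contradicting the
   minimality of Q_s. *)

Section Flows.
Variables (V A : finType) (tl hd : A -> V).

Local Notation arc_next := (arc_next V A tl hd).
Local Notation dpath := (dpath V A tl hd).
Local Notation dcycle := (dcycle V A tl hd).
Local Notation disjoint_paths := (disjoint_paths V A tl hd).
Local Notation kpath_union := (kpath_union V A tl hd).

Definition fdeg (f : A -> V) (F : {set A}) (v : V) : nat :=
  #|[set a in F | f a == v]|.

Definition kflow (k : nat) (u w : V) (F : {set A}) : Prop :=
  forall v, fdeg tl F v + k * (v == w) = fdeg hd F v + k * (v == u).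

Definition arc_rel (F : {set A}) : rel V :=
  [rel x y | [exists a in F, (tl a == x) && (hd a == y)]].

Lemma card_set_in_uniq (p : seq A) (P : pred A) :
  uniq p -> #|[set a in p | P a]| = count P p.
Proof.
move=> Up; rewrite -size_filter -(card_uniqP (filter_uniq P Up)).
by apply: eq_card => a; rewrite inE mem_filter andbC.
Qed.

Lemma fdeg_seq (f : A -> V) (p : seq A) v :
  uniq p -> fdeg f [set a in p] v = count_mem v (map f p).
Proof.
move=> Up; rewrite /fdeg count_map -card_set_in_uniq //.
by apply: eq_card => a; rewrite !inE eq_sym.
Qed.

Lemma fdegE (f : A -> V) (F : {set A}) v : fdeg f F v = \sum_(a in F) (f a == v).
Proof.
rewrite /fdeg -sum1_card big_mkcond [RHS]big_mkcond /=.
by apply: eq_bigr => a _; rewrite !inE; case: (a \in F); case: (f a == v).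
Qed.

Lemma fdeg_setD (f : A -> V) (F X : {set A}) v :
  X \subset F -> fdeg f F v = fdeg f (F :\: X) v + fdeg f X v.
Proof.
move=> sXF; rewrite /fdeg -(cardsID X [set a in F | f a == v]) addnC.
congr (_ + _); apply: eq_card => a; rewrite !inE.
  by case: (a \in X).
by case aX: (a \in X); rewrite ?andbF //= (subsetP sXF a aX) andbT.
Qed.

Lemma fdeg_bigcup k (f : A -> V) (X : 'I_k -> {set A}) v :
  (forall i j, i != j -> [disjoint X i & X j]) ->
  fdeg f (\bigcup_(i < k) X i) v = \sum_(i < k) fdeg f (X i) v.
Proof.
move=> disX; rewrite fdegE (partition_disjoint_bigcup _ _ disX).
by apply: eq_bigr => i _; rewrite fdegE.
Qed.

Lemma sum_fdeg (f : A -> V) (F : {set A}) (R : {set V}) :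
  \sum_(v in R) fdeg f F v = #|[set a in F | f a \in R]|.
Proof.
under eq_bigr do rewrite fdegE.
rewrite exchange_big /= -sum1_card big_mkcond [RHS]big_mkcond /=.
apply: eq_bigr => a _; rewrite !inE; case: (a \in F) => //=.
case: (boolP (f a \in R)) => [faR | faNR].
  rewrite (bigD1 (f a)) //= big1 ?eqxx // => v /andP [_].
  by rewrite eq_sym => /negbTE ->.
by rewrite big1 // => v vR; case: eqP => // fav; rewrite fav vR in faNR.
Qed.

Lemma map_hd_path a0 p :
  path arc_next a0 p -> map hd (a0 :: p) = rcons (map tl p) (hd (last a0 p)).
Proof. by elim: p a0 => [|b p IHp] a0 //= /andP [/eqP-> /IHp <-]. Qed.

Lemma dpath_uniq u w p : dpath u w p -> uniq p.
Proof.
move=> [a0 [p' [-> [_ [_ [_ Uvs]]]]]].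
exact: map_uniq (subseq_uniq (subseq_cons _ _) Uvs).
Qed.

Lemma dpath_kflow u w p : dpath u w p -> kflow 1 u w [set a in p].
Proof.
move=> dp v; have Up := dpath_uniq dp.
move: dp => [a0 [p' [Ep [<- [Hp [<- _]]]]]].
rewrite !fdeg_seq // Ep (map_hd_path Hp) /= -cats1 count_cat /= !mul1n.
by rewrite ![_ == v]eq_sym; case: (v == tl a0); case: (v == _) => /=; lia.
Qed.

Lemma dcycle_kflow0 u w C : dcycle C -> kflow 0 u w C.
Proof.
move=> [a0 [p' [Hp [/eqP Hc [Ut ->]]]]] v; rewrite !mul0n.
have Up : uniq (a0 :: p') by exact: map_uniq Ut.
rewrite !fdeg_seq // (map_hd_path Hp) /= -cats1 count_cat /= Hc; lia.
Qed.

Lemma kflow_setD m n u w (F X : {set A}) :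
  X \subset F -> kflow (m + n) u w F -> kflow m u w X -> kflow n u w (F :\: X).
Proof.
move=> sXF flowF flowX v; move: (flowF v) (flowX v).
rewrite (fdeg_setD tl _ sXF) (fdeg_setD hd _ sXF) !mulnDl; lia.
Qed.

Lemma disjoint_paths_kflow k F u w P :
  disjoint_paths k F u w P -> kflow k u w (\bigcup_(i < k) [set a in P i]).
Proof.
move=> [dP [_ disP]] v.
have disX i j : i != j -> [disjoint [set a in P i] & [set a in P j]].
  move=> ij; apply/pred0P => a /=; rewrite !inE.
  by apply/negbTE/nandP; case: (boolP (a \in P i)) => [/(disP _ _ ij)|]; auto.
have : \sum_(i < k) (fdeg tl [set a in P i] v + (v == w)) =
       \sum_(i < k) (fdeg hd [set a in P i] v + (v == u)).
  by apply: eq_bigr => i _; have := dpath_kflow (dP i) v; rewrite !mul1n.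
by rewrite !big_split !sum_nat_const card_ord -!fdeg_bigcup.
Qed.

Lemma kpath_union_kflow k u w Q : kpath_union k u w Q -> kflow k u w Q.
Proof. by move=> [P [dP ->]]; exact: disjoint_paths_kflow dP. Qed.

Lemma kflow_connect k u w F : 0 < k -> kflow k u w F -> connect (arc_rel F) u w.
Proof.
move=> k_gt0 flowF; apply/idPn => not_uw.
set R := [set v | connect (arc_rel F) u v].
have uR : u \in R by rewrite inE connect0.
have wR : w \notin R by rewrite inE.
have out_sub_in : [set a in F | tl a \in R] \subset [set a in F | hd a \in R].
  apply/subsetP => a; rewrite !inE => /andP [aF ta]; rewrite aF.
  by apply: connect_trans ta (connect1 _); apply/existsP; exists a; rewrite aF !eqxx.
have : \sum_(v in R) (fdeg tl F v + k * (v == w)) =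
       \sum_(v in R) (fdeg hd F v + k * (v == u)).
  by apply: eq_bigr => v _; exact: flowF.
have sum_w : \sum_(v in R) k * (v == w) = 0.
  by rewrite big1 // => v vR; rewrite (negbTE (memPn wR v vR)) muln0.
have sum_u : \sum_(v in R) k * (v == u) = k.
  rewrite (bigD1 u) //= eqxx muln1 big1 ?addn0 // => v /andP [_].
  by case: eqP => // _ _; rewrite muln0.
rewrite !big_split /= !sum_fdeg sum_w sum_u.
by have := subset_leq_card out_sub_in; lia.
Qed.

Lemma lift_vertex_path F u vs :
  path (arc_rel F) u vs -> vs != [::] ->
  exists a0 p, [/\ map hd (a0 :: p) = vs, tl a0 = u, path arc_next a0 p
                 & all [in F] (a0 :: p)].
Proof.
elim: vs u => [|v [|v' vs] IHvs] u //= /andP [/existsP [a /and3P [aF /eqP ta /eqP ha]]].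
  by exists a, [::]; rewrite /= ha ta aF.
move=> /IHvs [//|b0 [p [Em tb Hp Fp]]].
exists a, (b0 :: p); split => //=; first by rewrite ha -Em.
  by rewrite /arc_next ha tb eqxx Hp.
by rewrite aF.
Qed.

Lemma connect_dpath F u w :
  u != w -> connect (arc_rel F) u w -> exists2 p, dpath u w p & {subset p <= F}.
Proof.
move=> uw /connectP [vs0 Hvs0 Ew]; case: (shortenP Hvs0) Ew => vs Hvs Uvs _ Ew; subst w.
have vs_nil : vs != [::] by apply: contraNneq uw => ->.
have [a0 [p [Em ta Hp /allP Fp]]] := lift_vertex_path Hvs vs_nil.
exists (a0 :: p) => //; exists a0, p; do 3!split => //.
by rewrite Em; split => //; rewrite -Em /= last_map.
Qed.

Lemma kflow_disjoint_paths k u w F :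
  u != w -> kflow k u w F -> exists P, disjoint_paths k F u w P.
Proof.
elim: k F => [|k IHk] F uw flowF.
  by exists (fun _ => [::]); split; [case | split; case].
have [p dp pF] := connect_dpath uw (kflow_connect (ltn0Sn k) flowF).
have sPF : [set a in p] \subset F by apply/subsetP => a; rewrite inE => /pF.
have [P [dP [sPF' disP]]] := IHk _ uw (kflow_setD (m := 1) sPF flowF (dpath_kflow dp)).
have notin_p j a : a \in P j -> a \notin p by move=> /sPF'; rewrite !inE => /andP [].
exists (fun i => oapp P p (unlift ord0 i)); split; [|split].
- by move=> i; case: unliftP => [j|] _ /=.
- move=> i; case: unliftP => [j|] _ /= a; last exact: pF.
  by move=> /sPF'; rewrite !inE => /andP [].
- move=> i j; case: unliftP => [i1|] ->; case: unliftP => [j1|] -> //= ij a.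
  + by apply: disP; apply: contraNneq ij => ->.
  + exact: notin_p.
  + by apply: contraTN => /notin_p.
Qed.

Lemma kflow_kpath_union k u w F :
  u != w -> kflow k u w F -> exists2 Q : {set A}, Q \subset F & kpath_union k u w Q.
Proof.
move=> uw /(kflow_disjoint_paths uw) [P [dP [sPF disP]]].
exists (\bigcup_(i < k) [set a in P i]).
  by apply/subsetP => a /bigcupP [i _]; rewrite inE => /sPF.
by exists P; split => //; split => //; split => // i a; rewrite inE.
Qed.

Lemma kpath_union_disjoint_paths k u w (Q F : {set A}) :
  kpath_union k u w Q -> Q \subset F -> exists P, disjoint_paths k F u w P.
Proof.
move=> [P [[dP [_ disP]] ->]] sQF; exists P; split => //; split => // i a aP.
by apply: (subsetP sQF); apply/bigcupP; exists i; rewrite ?inE.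
Qed.

Lemma min_kpath_union_cycle k u w Q C :
  u != w -> min_kpath_union V A tl hd k u w Q -> dcycle C -> ~~ (C \subset Q).
Proof.
move=> uw [unionQ minQ] cycleC; apply/negP => sCQ.
have flowQC : kflow k u w (Q :\: C).
  exact: (kflow_setD (m := 0) sCQ (kpath_union_kflow unionQ) (dcycle_kflow0 u w cycleC)).
have [Q' sQ'QC unionQ'] := kflow_kpath_union uw flowQC.
have eqQ' : Q' = Q := minQ Q' (subset_trans sQ'QC (subsetDl Q C)) unionQ'.
have [a aC] : exists a, a \in C.
  by move: cycleC => [a0 [p [_ [_ [_ ->]]]]]; exists a0; rewrite inE mem_head.
by move: (subsetP sQ'QC a); rewrite eqQ' (subsetP sCQ a aC) !inE aC => /(_ isT).
Qed.

Lemma min_steiner_conn_cover k r S (Q : V -> {set A}) a :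
  min_steiner_conn V A tl hd k r S ->
  (forall s, s \in S -> kpath_union k r s (Q s)) ->
  a \in \bigcup_(s in S) Q s.
Proof.
move=> [_ minD] unionQ; apply/idPn => aQ; apply: (minD a) => s sS.
apply: kpath_union_disjoint_paths (unionQ s sS) _.
apply/subsetP => b bQ; rewrite !inE andbT; apply: contraNneq aQ => <-.
by apply/bigcupP; exists s.
Qed.

End Flows.

Theorem lemma2p8 (V A : finType) (tl hd : A -> V) (k : nat) (r : V) (S : {set V})
  (Hloop : loopless V A tl hd) (HrS : r \notin S)
  (Hmin : min_steiner_conn V A tl hd k r S) (Hreg : regular3 V A tl hd k r S)
  (C : {set A}) (HC : dcycle V A tl hd C)
  (Q : V -> {set A}) (HQ : forall s, s \in S -> min_kpath_union V A tl hd k r s (Q s)) :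
  C \subset \bigcup_(s in S) Q s /\ (forall s, s \in S -> C :\: Q s != set0).
Proof.
split.
  apply/subsetP => a _; apply: min_steiner_conn_cover Hmin _.
  by move=> s /HQ [].
move=> s sS; rewrite setD_eq0; apply: min_kpath_union_cycle (HQ s sS) HC.
by apply: contraNneq HrS => ->.
Qed.
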